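(* Let $X$ be a Banach lattice with order continuous norm, let $(S_\lambda)_{\lambda\in\Lambda}$ be a family of convex monotone semigroups on $X$, and suppose $S$ is the semigroup envelope of $(S_\lambda)_{\lambda\in\Lambda}$. Then $S(t)x=\sup_{\pi\in P_t}J_\pi x$ for all $t\ge0$ and $x\in X$.
   Context: A Banach lattice $X$ has order continuous norm if $\|x_\alpha\|\to 0$ for every net $x_\alpha\downarrow 0$ (then every nonempty subset bounded above has a supremum). An operator $T\colon X\to X$ is convex if $T(\lambda x+(1-\lambda)y)\le\lambda Tx+(1-\lambda)Ty$, monotone if $x\le y\Rightarrow Tx\le Ty$, bounded if $\sup_{\|x\|\le r}\|Tx\|<\infty$ for all $r>0$. A semigroup on $X$ is a family $(S(t))_{t\ge0}$ of bounded operators $X\to X$ with $S(0)=\mathrm{id}$ and $S(t+s)=S(t)S(s)$; convex/monotone if every $S(t)$ is. For semigroups $S,T$ write $S\le T$ if $S(t)x\le T(t)x$ for all $t,x$. A semigroup is an upper bound of $(S_\lambda)$ if it dominates every $S_\lambda$; the (upper) semigroup envelope is the smallest upper bound. Let $P$ be the set of finite $\pi\subset[0,\infty)$ with $0\in\pi$, $P_t:=\{\pi\in P:\max\pi=t\}$. Define $J_hx:=\sup_{\lambda\in\Lambda}S_\lambda(h)x$ for $h>0$ ($J_0=\mathrm{id}$) and for $\pi=\{t_0<\dots<t_m\}$, $t_0=0$, $J_\pi:=J_{t_1-t_0}\cdots J_{t_m-t_{m-1}}$. *)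

From HB Require Import structures.
From mathcomp Require Import all_boot all_order all_algebra.
From mathcomp Require Import all_classical all_reals all_analysis.
Set Implicit Arguments. Unset Strict Implicit. Unset Printing Implicit Defensive.
Import Order.TTheory GRing.Theory Num.Theory.
Import numFieldNormedType.Exports.
Local Open Scope classical_set_scope.
Local Open Scope ring_scope.

Section BanachLattice.
Variables (R : realType) (X : completeNormedModType R) (le : X -> X -> Prop).

Definition is_ub (A : set X) (u : X) : Prop := forall a, A a -> le a u.
Definition is_sup (A : set X) (s : X) : Prop :=
  is_ub A s /\ forall u, is_ub A u -> le s u.
Definition is_lb (A : set X) (u : X) : Prop := forall a, A a -> le u a.
Definition is_inf (A : set X) (s : X) : Prop :=
  is_lb A s /\ forall u, is_lb A u -> le u s.

(** the supremum of [A] (when it exists; it is unique by antisymmetry) *)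
Definition supX (A : set X) : X := xget 0 (is_sup A).

Definition absX (x : X) : X := supX [set x; - x].

Record is_banach_lattice : Prop := {
  bl_refl : forall x, le x x;
  bl_antisym : forall x y, le x y -> le y x -> x = y;
  bl_trans : forall x y z, le x y -> le y z -> le x z;
  bl_add : forall x y z, le x y -> le (x + z) (y + z);
  bl_scale : forall (a : R) x y, 0 <= a -> le x y -> le (a *: x) (a *: y);
  bl_sup2 : forall x y, exists s, is_sup [set x; y] s;
  bl_norm : forall x y, le (absX x) (absX y) -> `|x| <= `|y|
}.

(** Order continuous norm: for every net x_a decreasing to 0, ||x_a|| -> 0.
    A net is indexed by a nonempty directed preordered type. *)
Definition order_continuous_norm : Prop :=
  forall (I : Type) (leI : I -> I -> Prop) (x : I -> X),
    inhabited I ->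
    (forall i, leI i i) ->
    (forall i j k, leI i j -> leI j k -> leI i k) ->
    (forall i j, exists k, leI i k /\ leI j k) ->
    (forall i j, leI i j -> le (x j) (x i)) ->
    is_inf (range x) 0 ->
    forall e : R, 0 < e -> exists i0, forall i, leI i0 i -> `|x i| < e.

Definition bounded_op (T : X -> X) : Prop :=
  forall r : R, 0 < r -> exists M : R, forall x, `|x| <= r -> `|T x| <= M.
Definition convex_op (T : X -> X) : Prop :=
  forall (l : R) x y, 0 <= l <= 1 ->
    le (T (l *: x + (1 - l) *: y)) (l *: T x + (1 - l) *: T y).
Definition monotone_op (T : X -> X) : Prop :=
  forall x y, le x y -> le (T x) (T y).

(** semigroups: families indexed by t >= 0 (values at t < 0 are irrelevant) *)
Definition is_semigroup (S : R -> X -> X) : Prop :=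
  (forall t, 0 <= t -> bounded_op (S t)) /\
  (forall x, S 0 x = x) /\
  (forall t s x, 0 <= t -> 0 <= s -> S (t + s) x = S t (S s x)).
Definition convex_semigroup (S : R -> X -> X) : Prop :=
  is_semigroup S /\ forall t, 0 <= t -> convex_op (S t).
Definition monotone_semigroup (S : R -> X -> X) : Prop :=
  is_semigroup S /\ forall t, 0 <= t -> monotone_op (S t).

Definition sg_le (S T : R -> X -> X) : Prop :=
  forall t x, 0 <= t -> le (S t x) (T t x).

Definition is_upper_bound (L : Type) (Sf : L -> R -> X -> X)
    (T : R -> X -> X) : Prop :=
  is_semigroup T /\ forall l, sg_le (Sf l) T.

Definition is_envelope (L : Type) (Sf : L -> R -> X -> X)
    (S : R -> X -> X) : Prop :=
  is_upper_bound Sf S /\ forall T, is_upper_bound Sf T -> sg_le S T.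

Definition Jh (L : Type) (Sf : L -> R -> X -> X) (h : R) (x : X) : X :=
  if h == 0 then x else supX [set Sf l h x | l in [set: L]].

(** a finite set pi in P (0 in pi, pi subset [0,oo)) is represented by its
    strictly increasing enumeration [t_0 = 0; t_1; ...; t_m] *)
Definition partition_of (t : R) (pi : seq R) : Prop :=
  sorted <%R pi /\ head 1 pi = 0 /\ last 0 pi = t.

Fixpoint Jpi (L : Type) (Sf : L -> R -> X -> X) (pi : seq R) (x : X) : X :=
  match pi with
  | a :: ((b :: _) as s) => Jh Sf (b - a) (Jpi Sf s x)
  | _ => x
  end.

End BanachLattice.

From HB Require Import structures.
From mathcomp Require Import all_boot all_order all_algebra.
From mathcomp Require Import all_classical all_reals all_analysis.
From mathcomp Require Import lra.
Import Order.TTheory GRing.Theory Num.Theory.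
Import numFieldNormedType.Exports.
Local Open Scope classical_set_scope.
Local Open Scope ring_scope.
Set Implicit Arguments. Unset Strict Implicit. Unset Printing Implicit Defensive.

(* Let [Jsup t y] be the supremum of [J_h1 (... (J_hm y))] over all compositions
   [t = h1 + ... + hm] of [t] into positive steps; it exists because an order continuous
   norm makes the lattice Dedekind complete, and it lies below [S t y].  Splitting a
   composition at [t] gives [Jsup (t + s) <= Jsup t \o Jsup s].  Conversely the compositions
   of [s] form an upward directed family (a common refinement only increases [J]), and a
   convex monotone bounded operator commutes with directed suprema when the norm is order
   continuous; this gives [Jsup t \o Jsup s <= Jsup (t + s)].  So [Jsup] is a semigroup
   dominating every [S_l], and minimality of the envelope forces [S = Jsup].  A partition
   [0 = t0 < ... < tm = t] is a composition written through its partial sums.  For an empty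
   family every semigroup is an upper bound; comparing [S] with the translation semigroups
   forces [X = 0]. *)

Lemma near_Sinv_lt (R : archiRealFieldType) (e : R) :
  0 < e -> \forall n \near \oo, n.+1%:R^-1 < e.
Proof. by move=> e0; exact: (near_infty_natSinv_lt (PosNum e0)). Qed.

Section BanachLattice.
Variables (R : realType) (X : completeNormedModType R) (le : X -> X -> Prop).
Hypothesis HBL : is_banach_lattice le.
Local Notation "x ≤ y" := (le x y) (at level 70, no associativity).
Local Notation sup2 x y := (supX le [set x; y]).

Let leXX := bl_refl HBL.
Let leX_trans := bl_trans HBL.
Let leX_anti := bl_antisym HBL.

Lemma leXD x y z w : x ≤ y -> z ≤ w -> x + z ≤ y + w.
Proof.
move=> xy zw; apply: leX_trans (bl_add HBL z xy) _.
by rewrite ![y + _]addrC; exact: bl_add.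
Qed.

Lemma subX_ge0 x y : 0 ≤ y - x <-> x ≤ y.
Proof.
split=> h; first by have := bl_add HBL x h; rewrite add0r subrK.
by have := bl_add HBL (- x) h; rewrite subrr.
Qed.

Lemma leXN x y : x ≤ y -> - y ≤ - x.
Proof. by move=> xy; apply/subX_ge0; rewrite opprK addrC; exact/subX_ge0. Qed.

Lemma is_sup_unique (A : set X) s s' : is_sup le A s -> is_sup le A s' -> s = s'.
Proof. by move=> [ubs les] [ubs' les']; apply: leX_anti; [apply: les | apply: les']. Qed.

Lemma supX_is_sup (A : set X) : (exists s, is_sup le A s) -> is_sup le A (supX le A).
Proof. exact: xgetPex. Qed.

Lemma supXE (A : set X) s : is_sup le A s -> supX le A = s.
Proof. by move=> supAs; apply: (is_sup_unique (supX_is_sup _) supAs); exists s. Qed.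

Lemma sup2P x y : is_sup le [set x; y] (sup2 x y).
Proof. exact/supX_is_sup/bl_sup2. Qed.

Lemma sup2_ge_l x y : x ≤ sup2 x y.
Proof. by apply: (sup2P x y).1; left. Qed.

Lemma sup2_ge_r x y : y ≤ sup2 x y.
Proof. by apply: (sup2P x y).1; right. Qed.

Lemma sup2_le x y u : x ≤ u -> y ≤ u -> sup2 x y ≤ u.
Proof. by move=> xu yu; apply: (sup2P x y).2 => a [->|->]. Qed.

Lemma absX_ge0 x : 0 ≤ absX le x.
Proof.
have : 0 ≤ absX le x + absX le x.
  by rewrite -(subrr x); apply: leXD; [exact: sup2_ge_l | exact: sup2_ge_r].
have half_ge0 : (0 : R) <= 2^-1 by rewrite invr_ge0 ler0n.
move=> /(bl_scale HBL half_ge0).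
have halfK : (2^-1 + 2^-1 : R) = 1 by lra.
by rewrite scaler0 scalerDr -scalerDl halfK scale1r.
Qed.

Lemma absX_id p : 0 ≤ p -> absX le p = p.
Proof.
move=> p0; apply: supXE; split=> [a [->|->]|u]; first exact: leXX.
  by apply: (leX_trans _ p0); rewrite -oppr0; exact: leXN.
by apply; left.
Qed.

Lemma norm_absX x : `|absX le x| = `|x|.
Proof.
by apply/le_anti/andP; split; apply: (bl_norm HBL); rewrite (absX_id (absX_ge0 x)); exact: leXX.
Qed.

Lemma normX_le p q : 0 ≤ p -> p ≤ q -> `|p| <= `|q|.
Proof.
move=> p0 pq; apply: (bl_norm HBL); rewrite absX_id //.
exact: leX_trans pq (sup2_ge_l _ _).
Qed.

Lemma normX_sandwich a z b : a ≤ z -> z ≤ b -> `|z| <= `|a| + `|b|.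
Proof.
move=> az zb; set m := absX le a + absX le b.
have m0 : 0 ≤ m by rewrite -(addr0 0); apply: leXD; exact: absX_ge0.
have zm : absX le z ≤ m.
  apply: sup2_le.
    rewrite -(add0r z) /m; apply: leXD (absX_ge0 a) (leX_trans zb _); exact: sup2_ge_l.
  rewrite -(addr0 (- z)) /m; apply: leXD (leX_trans (leXN az) _) (absX_ge0 b).
  exact: sup2_ge_r.
have := bl_norm HBL (x := z) (y := m); rewrite (absX_id m0) => /(_ zm) /le_trans; apply.
by rewrite -(norm_absX a) -(norm_absX b) ler_normD.
Qed.

(* The negative part [sup2 (-w) 0] of [w] has norm at most [`|p - w|] for every [p >= 0]. *)
Lemma ge0X_closed w :
  (forall e : R, 0 < e -> exists2 p, 0 ≤ p & `|p - w| < e) -> 0 ≤ w.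
Proof.
move=> approx; set n := sup2 (- w) 0.
have n_small p : 0 ≤ p -> `|n| <= `|p - w|.
  move=> p0; rewrite -(norm_absX (p - w)); apply: normX_le; first exact: sup2_ge_r.
  apply: sup2_le; last exact: absX_ge0.
  apply: (leX_trans _ (sup2_ge_l _ _)); rewrite -{1}(add0r (- w)); exact: leXD.
have /normr0_eq0 n0 : `|n| = 0.
  apply/eqP; rewrite eq_le normr_ge0 andbT; apply/ler_addgt0Pr => e e0.
  have [p p0 pw] := approx e e0; rewrite add0r; exact: le_trans (n_small p p0) (ltW pw).
by rewrite -oppr0 -[w]opprK; apply: leXN; rewrite -n0; exact: sup2_ge_l.
Qed.

Lemma le0X_archi w c : (forall n, w *+ n ≤ c) -> w ≤ 0.
Proof.
move=> wc; rewrite -oppr0 -[w]opprK; apply: leXN; apply: ge0X_closed => e e0.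
have [N _ /(_ N (leqnn N)) Ne] := near_Sinv_lt (divr_gt0 e0 (ltr_pwDr ltr01 (normr_ge0 c))).
have N0 : 0 <= N.+1%:R^-1 :> R by rewrite invr_ge0 ler0n.
exists (N.+1%:R^-1 *: c - w).
  apply/subX_ge0; have := bl_scale HBL N0 (wc N.+1).
  by rewrite -scalerMnr scalerMnl -mulr_natr mulVf ?pnatr_eq0 // scale1r.
rewrite opprK subrK normrZ ger0_norm //; apply: le_lt_trans (_ : _ <= N.+1%:R^-1 * (`|c| + 1)) _.
  by rewrite ler_wpM2l // lerDl.
by rewrite -ltr_pdivlMr ?ltr_pwDr ?normr_ge0.
Qed.

Definition fsupX (a0 : X) (s : seq X) : X := foldr (fun a b => sup2 a b) a0 s.

Lemma fsupX_ge a0 s a : a \in a0 :: s -> a ≤ fsupX a0 s.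
Proof.
elim: s a => [|b s IH] a; first by rewrite mem_seq1 => /eqP ->; exact: leXX.
rewrite !inE => /or3P[/eqP ->|/eqP ->|sa].
- by apply: (leX_trans _ (sup2_ge_r _ _)); apply: IH; rewrite mem_head.
- exact: sup2_ge_l.
- by apply: (leX_trans _ (sup2_ge_r _ _)); apply: IH; rewrite inE sa orbT.
Qed.

Lemma fsupX_le a0 s u : (forall a, a \in a0 :: s -> a ≤ u) -> fsupX a0 s ≤ u.
Proof.
elim: s => [|b s IH] su; first by apply: su; rewrite mem_head.
apply: sup2_le; first by apply: su; rewrite !inE eqxx orbT.
by apply: IH => a; rewrite inE => /orP[/eqP ->|sa]; apply: su; rewrite !inE ?eqxx ?sa ?orbT.
Qed.

Definition directed (D : set X) :=
  forall a b, D a -> D b -> exists2 c, D c & a ≤ c /\ b ≤ c.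

Lemma directed_image (F : X -> X) (D : set X) :
  monotone_op le F -> directed D -> directed (F @` D).
Proof.
move=> Fmono dirD _ _ [a Da <-] [b Db <-]; have [c Dc [ac bc]] := dirD a b Da Db.
by exists (F c); [exists c | split; exact: Fmono].
Qed.

Lemma ub_gap_lb_le0 (D : set X) a0 u w : D a0 -> is_ub le D u ->
  (forall a v, D a -> is_ub le D v -> w ≤ v - a) -> w ≤ 0.
Proof.
move=> Da0 ubu wlb.
have ub_sub v : is_ub le D v -> is_ub le D (v - w).
  by move=> ubv a Da; apply/subX_ge0; rewrite addrAC; exact/subX_ge0/wlb.
have ub_n n : is_ub le D (u - w *+ n).
  elim: n => [|n IH]; first by rewrite mulr0n subr0.
  by rewrite mulrSr opprD addrA; exact: ub_sub.
by apply: (le0X_archi (c := u - a0)) => n; apply/subX_ge0; rewrite addrAC; exact/subX_ge0/ub_n.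
Qed.

Lemma convex_op_sub_le (T : X -> X) (mu : R) a d : convex_op le T -> 0 < mu <= 1 ->
  T d - T a ≤ mu *: (T (a + mu^-1 *: (d - a)) - T a).
Proof.
move=> Tconv /andP[mu0 mu1].
have := Tconv mu (a + mu^-1 *: (d - a)) a (introT andP (conj (ltW mu0) mu1)).
have -> : mu *: (a + mu^-1 *: (d - a)) + (1 - mu) *: a = d.
  rewrite scalerDr scalerA mulfV ?gt_eqF // scale1r scalerBl scale1r.
  by rewrite addrC addrA addrNK addrC subrK.
have convex_gap p q : mu *: p + (1 - mu) *: q - q = mu *: (p - q).
  by rewrite scalerBr scalerBl scale1r addrAC addrA subrK.
by move=> /(bl_add HBL (- T a)); rewrite convex_gap.
Qed.

(* Convexity turns order closeness into norm closeness: with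
   [z = a + mu^-1 (d - a)], [0 <= T d - T a <= mu (T z - T a)] and [z] stays in a ball. *)
Lemma convex_op_cont_below (T : X -> X) :
  convex_op le T -> monotone_op le T -> bounded_op T ->
  forall d (e : R), 0 < e -> exists2 delta : R, 0 < delta &
    forall a, a ≤ d -> `|d - a| < delta -> `|T d - T a| < e.
Proof.
move=> Tconv Tmono Tbd d e e0.
have [M TM] := Tbd (`|d| + 2) (ltr_pwDr (ltr0Sn R 1) (normr_ge0 d)).
set K := 2 * `|M| + 1.
have K0 : 0 < K by rewrite ltr_pwDr // mulr_ge0.
set mu := Num.min 1 (e / K).
have mu0 : 0 < mu by rewrite lt_min ltr01 divr_gt0.
have mu1 : mu <= 1 by rewrite ge_min lexx.
have muK : mu * K <= e by rewrite -ler_pdivlMr // ge_min lexx orbT.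
exists mu => // a ad da; set z := a + mu^-1 *: (d - a).
have a_le : `|a| <= `|d| + `|d - a| by rewrite -{1}(subKr d a) ler_normB.
have z_le : `|z| <= `|a| + mu^-1 * `|d - a|.
  by apply: le_trans (ler_normD _ _) _; rewrite normrZ gtr0_norm ?invr_gt0.
have da_mu : mu^-1 * `|d - a| <= 1 by rewrite ler_pdivrMl // mulr1 ltW.
have Tza : `|T z - T a| < K.
  apply: le_lt_trans (ler_normB _ _) _.
  have := TM z; have := TM a; have := ler_norm M; rewrite /K; lra.
have Tda : 0 ≤ T d - T a by apply/subX_ge0; exact: Tmono.
have mu01 : 0 < mu <= 1 by rewrite mu0 mu1.
apply: le_lt_trans (normX_le Tda (convex_op_sub_le a d Tconv mu01)) _.
by rewrite normrZ gtr0_norm //; apply: lt_le_trans muK; rewrite ltr_pM2l.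
Qed.

Section OrderContinuity.
Hypothesis Hoc : order_continuous_norm le.

(* Order continuity is applied to the net of gaps [v - a], indexed by pairs of an
   element [a] of [D] and an upper bound [v] of [D]. *)
Lemma oc_ub_gap (D : set X) a0 u : D a0 -> directed D -> is_ub le D u ->
  forall e : R, 0 < e -> exists2 a, D a & exists2 v, is_ub le D v & `|v - a| < e.
Proof.
move=> Da0 dirD ubu e e0.
pose I := ({a | D a} * {v | is_ub le D v})%type.
pose leI (i j : I) := sval i.1 ≤ sval j.1 /\ sval j.2 ≤ sval i.2.
pose gap (i : I) := sval i.2 - sval i.1.
have meet_ub v v' : is_ub le D v -> is_ub le D v' -> is_ub le D (- sup2 (- v) (- v')).
  move=> ubv ubv' a Da; rewrite -[a]opprK; apply: leXN.
  by apply: sup2_le; apply: leXN; [exact: ubv | exact: ubv'].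
have meet_le v v' : - sup2 (- v) (- v') ≤ v /\ - sup2 (- v) (- v') ≤ v'.
  by split; [rewrite -[v in _ ≤ v]opprK | rewrite -[v' in _ ≤ v']opprK];
    apply: leXN; [exact: sup2_ge_l | exact: sup2_ge_r].
have inhI : inhabited I by constructor; exact: (exist _ a0 Da0, exist _ u ubu).
have leI_refl i : leI i i by split; exact: leXX.
have leI_trans i j k : leI i j -> leI j k -> leI i k.
  by move=> [ij1 ij2] [jk1 jk2]; split; [exact: leX_trans ij1 jk1 | exact: leX_trans jk2 ij2].
have dirI i j : exists k, leI i k /\ leI j k.
  move: i j => [[a Da] [v ubv]] [[b Db] [v' ubv']].
  have [c Dc [ac bc]] := dirD a b Da Db; have [mv mv'] := meet_le v v'.
  by exists (exist _ c Dc, exist _ _ (meet_ub _ _ ubv ubv')).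
have gap_anti i j : leI i j -> gap j ≤ gap i.
  by move=> [ij1 ij2]; apply: leXD ij2 (leXN ij1).
have gap_inf : is_inf le (range gap) 0.
  split=> [_ [i _ <-]|w wlb]; first exact/subX_ge0/(svalP i.2)/(svalP i.1).
  apply: (ub_gap_lb_le0 Da0 ubu) => a v Da ubv.
  by apply: wlb; exists (exist _ a Da, exist _ v ubv).
have [i0 gap_small] := Hoc inhI leI_refl leI_trans dirI gap_anti gap_inf e0.
exists (sval i0.1); first exact: svalP.
by exists (sval i0.2); [exact: svalP | exact: gap_small].
Qed.

Lemma oc_directed_sup (D : set X) a0 u : D a0 -> directed D -> is_ub le D u ->
  exists s, is_sup le D s.
Proof.
move=> Da0 dirD ubu.
have gapn n : exists av : X * X,
    [/\ D av.1, is_ub le D av.2 & `|av.2 - av.1| < n.+1%:R^-1].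
  have n_pos : 0 < n.+1%:R^-1 :> R by rewrite invr_gt0.
  have [a Da [v ubv av]] := oc_ub_gap Da0 dirD ubu n_pos.
  by exists (a, v).
have [f /all_and3[Da ubv gap]] := choice gapn.
pose a n := (f n).1; pose v n := (f n).2.
have near_a b n : D b -> a n ≤ b -> `|b - a n| < n.+1%:R^-1.
  move=> Db anb; apply: le_lt_trans (gap n); apply: normX_le; first exact/subX_ge0.
  exact: leXD (ubv n b Db) (leXX _).
have cvg_a : cvgn a.
  apply/cauchy_cvgP/cauchy_ballP => e e0; rewrite near_map2.
  have e20 : 0 < e / 2 by rewrite divr_gt0.
  near=> m n; rewrite -ball_normE /=.
  have [m_small n_small] : m.+1%:R^-1 < e / 2 /\ n.+1%:R^-1 < e / 2.
    by split; [near: m | near: n]; exact: near_Sinv_lt.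
  have [c Dc [amc anc]] := dirD _ _ (Da m) (Da n).
  have -> : a m - a n = (c - a n) - (c - a m) by rewrite [RHS]addrC opprB addrA subrK.
  apply: le_lt_trans (ler_normB _ _) _; rewrite [e]splitr.
  by apply: ltrD; [exact: lt_trans (near_a _ _ Dc anc) n_small
                  | exact: lt_trans (near_a _ _ Dc amc) m_small].
pose s := limn a.
have a_to_s e : 0 < e -> \forall n \near \oo, `|s - a n| < e.
  by move: cvg_a => /cvgrPdist_lt; apply.
exists s; split=> [b Db|w ubw]; apply/subX_ge0; apply: ge0X_closed => e e0.
  have e20 : 0 < e / 2 by rewrite divr_gt0.
  near \oo => n; exists (v n - b); first exact/subX_ge0/ubv.
  have -> : v n - b - (s - b) = (v n - a n) - (s - a n) by rewrite !opprB !addrA !subrK.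
  apply: le_lt_trans (ler_normB _ _) _; rewrite [e]splitr; apply: ltrD.
    by apply: lt_trans (gap n) _; near: n; exact: near_Sinv_lt.
  by near: n; exact: a_to_s.
near \oo => n; exists (w - a n); first exact/subX_ge0/ubw/Da.
by rewrite opprB addrC addrA subrK; near: n; exact: a_to_s.
Unshelve. all: by end_near.
Qed.

Lemma oc_sup_approx (D : set X) a0 d : D a0 -> directed D -> is_sup le D d ->
  forall e : R, 0 < e -> exists2 a, D a & `|d - a| < e.
Proof.
move=> Da0 dirD [ubd led] e e0; have [a Da [v ubv gap]] := oc_ub_gap Da0 dirD ubd e0.
exists a => //; apply: le_lt_trans gap; apply: normX_le; first exact/subX_ge0/ubd.
exact: leXD (led _ ubv) (leXX _).
Qed.

Lemma oc_sup_exists (A : set X) a0 u : A a0 -> is_ub le A u -> exists s, is_sup le A s.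
Proof.
move=> Aa0 ubu; pose D := fsupX a0 @` [set s | forall a, a \in s -> A a].
have inA s a : (forall b, b \in s -> A b) -> a \in a0 :: s -> A a.
  by move=> sA; rewrite inE => /orP[/eqP ->|/sA].
have Da0 : D a0 by exists [::].
have dirD : directed D.
  move=> _ _ [s1 s1A <-] [s2 s2A <-].
  exists (fsupX a0 (s1 ++ s2)).
    by exists (s1 ++ s2) => // a; rewrite mem_cat => /orP[/s1A|/s2A].
  by split; apply: fsupX_le => a sa; apply: fsupX_ge; move: sa;
    rewrite !inE mem_cat => /orP[->|->]; rewrite ?orbT.
have ubD : is_ub le D u.
  by move=> _ [s sA <-]; apply: fsupX_le => a /(inA _ _ sA); exact: ubu.
have [s [ubs les]] := oc_directed_sup Da0 dirD ubD.
exists s; split=> [a Aa|w ubw].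
  have Da : D (fsupX a0 [:: a]) by exists [:: a] => // b; rewrite mem_seq1 => /eqP ->.
  by apply: (leX_trans _ (ubs _ Da)); apply: fsupX_ge; rewrite !inE eqxx orbT.
by apply: les => _ [t tA <-]; apply: fsupX_le => a /(inA _ _ tA); exact: ubw.
Qed.

Lemma convex_op_directed_sup (T : X -> X) (D : set X) a0 d :
  convex_op le T -> monotone_op le T -> bounded_op T ->
  D a0 -> directed D -> is_sup le D d -> is_sup le (T @` D) (T d).
Proof.
move=> Tconv Tmono Tbd Da0 dirD supd.
split=> [_ [a Da <-]|u ubu]; first exact/Tmono/supd.1.
apply/subX_ge0; apply: ge0X_closed => e e0.
have [delta delta0 Tcont] := convex_op_cont_below Tconv Tmono Tbd d e0.
have [a Da da] := oc_sup_approx Da0 dirD supd delta0.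
exists (u - T a); first by apply/subX_ge0; apply: ubu; exists a.
by rewrite opprB addrC addrA subrK; exact: Tcont (supd.1 _ Da) da.
Qed.

End OrderContinuity.

Lemma translation_semigroup (v : X) : is_semigroup (fun t x => x + t *: v).
Proof.
split=> [t t0 r r0|]; last first.
  by split=> [x|t s x _ _]; rewrite ?scale0r ?addr0 // scalerDl [t *: v + _]addrC addrA.
exists (r + t * `|v|) => x xr; apply: le_trans (ler_normD _ _) _.
by rewrite normrZ ger0_norm // lerD2r.
Qed.

Lemma envelope_empty_trivial (L : Type) (Sf : L -> R -> X -> X) (S : R -> X -> X) :
  ~ inhabited L -> is_envelope le Sf S -> forall w : X, w = 0.
Proof.
move=> noL [_ S_least].
have translation_ub v : is_upper_bound le Sf (fun t x => x + t *: v).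
  by split=> [|l]; [exact: translation_semigroup | case: noL; constructor].
have le0 w : w ≤ 0.
  have := S_least _ (translation_ub (S 1 0 - w)) 1 0 ler01.
  rewrite scale1r add0r -subX_ge0 addrAC subrr add0r => /leXN.
  by rewrite opprK oppr0.
move=> w; have w_ge0 : 0 ≤ w by rewrite -oppr0 -[w]opprK; exact/leXN/le0.
exact: leX_anti (le0 w) w_ge0.
Qed.

End BanachLattice.

Section Compositions.
Variable R : realType.

Definition composition (t : R) : set (seq R) :=
  [set c | all (fun h => 0 < h) c /\ \sum_(h <- c) h = t].

Local Notation gaps := (pairmap (fun x y : R => y - x)).

Lemma composition_ge0 t c : composition t c -> 0 <= t.
Proof.
case=> + <-; elim: c => [|h c IH]; first by rewrite big_nil.
by rewrite big_cons => /andP[h0 /IH]; apply: addr_ge0 (ltW h0).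
Qed.

Lemma composition_cons t h c : composition t (h :: c) <-> 0 < h /\ composition (t - h) c.
Proof.
rewrite /composition /= big_cons; split=> [[/andP[h0 c0] <-]|[h0 [c0 sc]]].
  by split=> //; split=> //; rewrite addrC addKr.
by split; [rewrite h0 | rewrite sc addrC subrK].
Qed.

Lemma composition_nil t : composition t [::] <-> t = 0.
Proof. by rewrite /composition /= big_nil; split=> [[_ <-]|->]. Qed.

Lemma composition0 c : composition 0 c -> c = [::].
Proof.
case: c => [//|h c] /composition_cons[h0 /composition_ge0].
by rewrite sub0r oppr_ge0 leNgt h0.
Qed.

Lemma composition1 t : 0 < t -> composition t [:: t].
Proof. by move=> t0; split; rewrite /= ?t0 // big_seq1. Qed.

Lemma composition_exists t : 0 <= t -> exists c, composition t c.
Proof.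
rewrite le_eqVlt => /orP[/eqP <-|t0]; last by exists [:: t]; exact: composition1.
by exists [::]; split; rewrite ?big_nil.
Qed.

Lemma composition_cat t s p q :
  composition t p -> composition s q -> composition (t + s) (p ++ q).
Proof. by move=> [p0 <-] [q0 <-]; split; rewrite ?all_cat ?p0 // big_cat. Qed.

Lemma path_gaps a s : path <%R a s = all (fun h => 0 < h) (gaps a s).
Proof. by elim: s a => [//|b s IH] a /=; rewrite subr_gt0 IH. Qed.

Lemma sum_gaps a s : \sum_(h <- gaps a s) h = last a s - a.
Proof.
elim: s a => [|b s IH] a; first by rewrite big_nil subrr.
by rewrite /= big_cons IH addrC addrA subrK.
Qed.

Lemma partition_gaps t s : partition_of t (0 :: s) <-> composition t (gaps 0 s).
Proof.
rewrite /partition_of /composition /= path_gaps sum_gaps subr0.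
by split=> [[? [_ ?]]|[? ?]].
Qed.

Lemma partition_head0 (t : R) pi : partition_of t pi -> exists s, pi = 0 :: s.
Proof. by case: pi => [[_ [/= /eqP]]|a s [_ [/= -> _]]]; [rewrite oner_eq0 | exists s]. Qed.

Lemma gaps_scanlK (a : R) : cancel (scanl +%R a) (gaps a).
Proof. by apply: scanlK => x y; rewrite addrC addKr. Qed.

End Compositions.

Section Envelope.
Variables (R : realType) (X : completeNormedModType R) (le : X -> X -> Prop).
Hypotheses (HBL : is_banach_lattice le) (Hoc : order_continuous_norm le).
Variables (L : Type) (Sf : L -> R -> X -> X) (S : R -> X -> X).
Hypotheses (Hconv : forall l, convex_semigroup le (Sf l))
  (Hmon : forall l, monotone_semigroup le (Sf l)) (Henv : is_envelope le Sf S).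
Variable l0 : L.
Local Notation "x ≤ y" := (le x y) (at level 70, no associativity).
Local Notation J := (Jh le Sf).
Local Notation gaps := (pairmap (fun x y : R => y - x)).

Let leXX := bl_refl HBL.
Let leX_trans := bl_trans HBL.
Let leX_anti := bl_antisym HBL.
Let S0 y : S 0 y = y := Henv.1.1.2.1 y.
Let SD t s y : 0 <= t -> 0 <= s -> S (t + s) y = S t (S s y) := Henv.1.1.2.2 t s y.
Let Sf0 l y : Sf l 0 y = y := (Hmon l).1.2.1 y.
Let SfD l t s y : 0 <= t -> 0 <= s -> Sf l (t + s) y = Sf l t (Sf l s y) :=
  (Hmon l).1.2.2 t s y.
Let Sf_mono l h : 0 <= h -> monotone_op le (Sf l h) := (Hmon l).2 h.

Lemma Sf_le_S l h y : 0 <= h -> Sf l h y ≤ S h y.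
Proof. exact: Henv.1.2. Qed.

Lemma J_is_sup h y : 0 < h -> is_sup le [set Sf l h y | l in [set: L]] (J h y).
Proof.
move=> h0; rewrite /Jh gt_eqF //; apply: supX_is_sup.
apply: (oc_sup_exists HBL Hoc (a0 := Sf l0 h y) (u := S h y)); first by exists l0.
by move=> _ [l _ <-]; apply: Sf_le_S; exact: ltW.
Qed.

Lemma Sf_le_J l h y : 0 < h -> Sf l h y ≤ J h y.
Proof. by move=> h0; apply: (J_is_sup y h0).1; exists l. Qed.

Lemma J_le_S h y : 0 <= h -> J h y ≤ S h y.
Proof.
rewrite le_eqVlt => /orP[/eqP <-|h0].
  by rewrite /Jh eqxx S0.
by apply: (J_is_sup y h0).2 => _ [l _ <-]; apply: Sf_le_S; exact: ltW.
Qed.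

Lemma J_mono h : 0 <= h -> monotone_op le (J h).
Proof.
rewrite le_eqVlt => /orP[/eqP <- y y'|h0 y y' yy']; first by rewrite /Jh eqxx.
apply: (J_is_sup y h0).2 => _ [l _ <-]; apply: leX_trans (Sf_le_J l y' h0).
exact: Sf_mono (ltW h0) _ _ yy'.
Qed.

Lemma J_split a b y : 0 < a -> 0 < b -> J (a + b) y ≤ J a (J b y).
Proof.
move=> a0 b0; apply: (J_is_sup y (addr_gt0 a0 b0)).2 => _ [l _ <-].
rewrite SfD ?ltW //; apply: leX_trans (Sf_le_J l _ a0).
exact: Sf_mono (ltW a0) _ _ (Sf_le_J l y b0).
Qed.

Lemma J_directed_sup h (D : set X) a0 d : 0 < h ->
  D a0 -> directed le D -> is_sup le D d -> is_sup le (J h @` D) (J h d).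
Proof.
move=> h0 Da0 dirD supd; split=> [_ [a Da <-]|u ubu].
  exact: J_mono (ltW h0) _ _ (supd.1 _ Da).
apply: (J_is_sup d h0).2 => _ [l _ <-].
have [[Sf_bd _] Sf_conv] := Hconv l.
have Sf_sup := convex_op_directed_sup HBL Hoc (Sf_conv h (ltW h0)) (Sf_mono l (ltW h0))
  (Sf_bd h (ltW h0)) Da0 dirD supd.
apply: Sf_sup.2 => _ [a Da <-]; apply: leX_trans (Sf_le_J l a h0) _.
by apply: ubu; exists a.
Qed.

Definition Jcomp (c : seq R) (y : X) : X := foldr J y c.

Lemma Jcomp_cat p q y : Jcomp (p ++ q) y = Jcomp p (Jcomp q y).
Proof. exact: foldr_cat. Qed.

Lemma Jcomp_mono c : all (fun h => 0 < h) c -> monotone_op le (Jcomp c).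
Proof.
elim: c => [_ y y' //|h c IH /andP[h0 /IH c_mono] y y' yy'].
exact/(J_mono (ltW h0))/c_mono.
Qed.

Lemma Jcomp_le_S t c y : composition t c -> Jcomp c y ≤ S t y.
Proof.
elim: c t => [t /composition_nil ->|h c IH t /composition_cons[h0 tc]].
  by rewrite S0; exact: leXX.
rewrite -(subrK h t) addrC (SD _ (ltW h0) (composition_ge0 tc)).
apply: leX_trans (J_le_S _ (ltW h0)); exact/(J_mono (ltW h0))/IH.
Qed.

Lemma J_le_Jcomp h c y : 0 < h -> composition h c -> J h y ≤ Jcomp c y.
Proof.
elim: c h => [h h0 /composition_nil h_0|a c IH h h0 /composition_cons[a0 hc]].
  by move: h0; rewrite h_0 ltxx.
have := composition_ge0 hc; rewrite le_eqVlt => /orP[/eqP ha|ha].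
  by move: hc; rewrite -ha => /composition0 ->; rewrite -(subrK a h) -ha add0r; exact: leXX.
rewrite -(subrK a h) addrC; apply: leX_trans (J_split _ a0 ha) _.
exact/(J_mono (ltW a0))/IH.
Qed.

Lemma composition_split t s c : 0 <= t -> 0 <= s -> composition (t + s) c ->
  exists p q, [/\ composition t p, composition s q & forall y, Jcomp c y ≤ Jcomp (p ++ q) y].
Proof.
elim: c t => [|h c IH] t t0 s0.
  move=> /composition_nil ts; have [-> ->] : t = 0 /\ s = 0 by split; lra.
  by exists [::], [::]; split=> //; rewrite composition_nil.
move=> /composition_cons[h0 c_ts].
have [ht|th] := leP h t.
  have th0 : 0 <= t - h by rewrite subr_ge0.
  have [|p [q [p_th q_s cpq]]] := IH (t - h) th0 s0; first by rewrite addrAC.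
  exists (h :: p), q; split=> //; first exact/composition_cons.
  by move=> y; exact/(J_mono (ltW h0))/cpq.
have [t_0|t_pos] := eqVneq t 0.
  exists [::], (h :: c); split=> [||y]; last exact: leXX.
    by rewrite composition_nil.
  by apply/composition_cons; rewrite t_0 add0r in c_ts.
have {t_pos}t_pos : 0 < t by rewrite lt_def t_pos t0.
have ht0 : 0 < h - t by rewrite subr_gt0.
exists [:: t], ((h - t) :: c); split; first exact: composition1.
  by apply/composition_cons; split=> //; have -> : s - (h - t) = t + s - h by lra.
by move=> y; rewrite -{1}(subrK t h) addrC; exact: J_split.
Qed.

Lemma composition_directed t c1 c2 : composition t c1 -> composition t c2 ->
  exists2 c, composition t c & forall y, Jcomp c1 y ≤ Jcomp c y /\ Jcomp c2 y ≤ Jcomp c y.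
Proof.
elim: c2 t c1 => [|h c2 IH] t c1 tc1.
  move=> /composition_nil t_0; move: tc1; rewrite t_0 => /composition0 ->.
  by exists [::]; [exact/composition_nil | split; exact: leXX].
move=> /composition_cons[h0 tc2].
have tc1' : composition (h + (t - h)) c1 by rewrite addrC subrK.
have [p [q [hp tq c1pq]]] := composition_split (ltW h0) (composition_ge0 tc2) tc1'.
have [c tc qc] := IH _ _ tq tc2.
exists (p ++ c); first by rewrite -(subrK h t) addrC; exact: composition_cat.
move=> y; have [qcy c2cy] := qc y; rewrite Jcomp_cat; split.
  by apply: leX_trans (c1pq y) _; rewrite Jcomp_cat; exact: (Jcomp_mono hp.1).
by apply: leX_trans (J_le_Jcomp _ h0 hp); exact: (J_mono (ltW h0)).
Qed.

Lemma Jcomp_directed_sup c (D : set X) a0 d : all (fun h => 0 < h) c ->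
  D a0 -> directed le D -> is_sup le D d -> is_sup le (Jcomp c @` D) (Jcomp c d).
Proof.
move=> + Da0 dirD supd; elim: c => [_|h c IH /andP[h0 c0]].
  have -> : Jcomp [::] @` D = D by apply/seteqP; split=> [_ [a Da <-] //|a Da]; exists a.
  exact: supd.
have -> : Jcomp (h :: c) @` D = J h @` (Jcomp c @` D) by rewrite image_comp.
apply: J_directed_sup h0 _ (directed_image (Jcomp_mono c0) dirD) (IH c0).
by exists a0.
Qed.

Definition Jsup (t : R) (y : X) : X := supX le [set Jcomp c y | c in composition t].

Lemma Jsup_is_sup t y : 0 <= t -> is_sup le [set Jcomp c y | c in composition t] (Jsup t y).
Proof.
move=> t0; apply: supX_is_sup; have [c tc] := composition_exists t0.
apply: (oc_sup_exists HBL Hoc (a0 := Jcomp c y) (u := S t y)); first by exists c.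
by move=> _ [c' tc' <-]; exact: Jcomp_le_S.
Qed.

Lemma Jcomp_le_Jsup t c y : composition t c -> Jcomp c y ≤ Jsup t y.
Proof. by move=> tc; apply: (Jsup_is_sup y (composition_ge0 tc)).1; exists c. Qed.

Lemma Jsup_le t y u : 0 <= t -> (forall c, composition t c -> Jcomp c y ≤ u) -> Jsup t y ≤ u.
Proof. by move=> t0 cu; apply: (Jsup_is_sup y t0).2 => _ [c tc <-]; exact: cu. Qed.

Lemma Jsup_le_S t y : 0 <= t -> Jsup t y ≤ S t y.
Proof. by move=> t0; apply: Jsup_le => // c; exact: Jcomp_le_S. Qed.

Lemma Sf_le_Jsup l t y : 0 <= t -> Sf l t y ≤ Jsup t y.
Proof.
rewrite le_eqVlt => /orP[/eqP <-|t0].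
  by rewrite Sf0; apply: (Jcomp_le_Jsup (c := [::])); rewrite composition_nil.
by apply: leX_trans (Sf_le_J l y t0) _; exact: (Jcomp_le_Jsup y (composition1 t0)).
Qed.

Lemma Jsup0 y : Jsup 0 y = y.
Proof.
apply: leX_anti; first by apply: Jsup_le => // c /composition0 ->; exact: leXX.
by apply: (Jcomp_le_Jsup (c := [::])); rewrite composition_nil.
Qed.

Lemma JsupD t s y : 0 <= t -> 0 <= s -> Jsup (t + s) y = Jsup t (Jsup s y).
Proof.
move=> t0 s0; apply: leX_anti.
  apply: Jsup_le (addr_ge0 t0 s0) _ => c /(composition_split t0 s0)[p [q [tp sq cpq]]].
  apply: leX_trans (cpq y) _; rewrite Jcomp_cat; apply: leX_trans (Jcomp_le_Jsup _ tp).
  exact/(Jcomp_mono tp.1)/Jcomp_le_Jsup.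
apply: Jsup_le t0 _ => p tp.
have [c0 sc0] := composition_exists s0.
have D0 : [set Jcomp c y | c in composition s] (Jcomp c0 y) by exists c0.
have dirD : directed le [set Jcomp c y | c in composition s].
  move=> _ _ [c1 sc1 <-] [c2 sc2 <-]; have [c sc c12] := composition_directed sc1 sc2.
  by exists (Jcomp c y); [exists c | exact: c12].
apply: (Jcomp_directed_sup tp.1 D0 dirD (Jsup_is_sup y s0)).2 => _ [_ [q sq <-] <-].
by rewrite -Jcomp_cat; apply: Jcomp_le_Jsup; exact: composition_cat.
Qed.

Lemma Jsup_upper_bound : is_upper_bound le Sf Jsup.
Proof.
split; last by move=> l t y t0; exact: Sf_le_Jsup.
split; last by split; [exact: Jsup0 | move=> t s y; exact: JsupD].
move=> t t0 r r0.
have [M1 SM1] := Henv.1.1.1 t t0 r r0.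
have [M2 SfM2] := (Hmon l0).1.1 t t0 r r0.
exists (M2 + M1) => y yr.
apply: le_trans (normX_sandwich HBL (Sf_le_Jsup l0 y t0) (Jsup_le_S y t0)) _.
exact: lerD (SfM2 y yr) (SM1 y yr).
Qed.

Lemma S_is_sup_Jcomp t y : 0 <= t -> is_sup le [set Jcomp c y | c in composition t] (S t y).
Proof.
move=> t0; split=> [_ [c tc <-]|u ubu]; first exact: Jcomp_le_S.
apply: leX_trans (Henv.2 _ Jsup_upper_bound t y t0) _.
by apply: Jsup_le t0 _ => c tc; apply: ubu; exists c.
Qed.

Lemma Jpi_gaps a s y : Jpi le Sf (a :: s) y = Jcomp (gaps a s) y.
Proof. by elim: s a => [//|b s IH] a; rewrite /= -IH. Qed.

Lemma Jpi_partitionsE t y :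
  [set Jpi le Sf pi y | pi in partition_of t] = [set Jcomp c y | c in composition t].
Proof.
apply/seteqP; split=> [_ [pi tpi <-]|_ [c tc <-]].
  have [s pi_s] := partition_head0 tpi; subst pi.
  by exists (gaps 0 s); [exact/partition_gaps | rewrite Jpi_gaps].
exists (0 :: scanl +%R 0 c); last by rewrite Jpi_gaps gaps_scanlK.
by apply/partition_gaps; rewrite gaps_scanlK.
Qed.

End Envelope.

Theorem corollary4p5 (R : realType) (X : completeNormedModType R)
    (le : X -> X -> Prop)
    (HBL : is_banach_lattice le) (Hoc : order_continuous_norm le)
    (L : Type) (Sf : L -> R -> X -> X)
    (Hconv : forall l, convex_semigroup le (Sf l))
    (Hmon : forall l, monotone_semigroup le (Sf l))
    (S : R -> X -> X) (Henv : is_envelope le Sf S) :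
  forall (t : R) (x : X), 0 <= t ->
    is_sup le [set Jpi le Sf pi x | pi in partition_of t] (S t x).
Proof.
move=> t x t0.
have [[l0]|noL] := pselect (inhabited L).
  by rewrite Jpi_partitionsE; exact: (S_is_sup_Jcomp HBL Hoc Hconv Hmon Henv l0).
have X0 := envelope_empty_trivial HBL noL Henv.
by split=> [a _|u _]; rewrite (X0 (S t x)) ?(X0 a) ?(X0 u); exact: bl_refl.
Qed.
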